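(* Let $H=(Q,\pi,f_0,f_1)$ satisfy Assumptions A1 and A2 (see context). Then for each $\lambda\in(0,1)$, $$\mathrm{mTDR}_H(\varphi_{\lambda,H})=\sup\{\mathrm{mTDR}_H(\psi):\mathrm{mFDR}_H(\psi)\le\mathrm{mFDR}_H(\varphi_{\lambda,H})\},$$ the supremum being over all multiple testing procedures $\psi$ (measurable maps $X\mapsto\psi(X)\in\{0,1\}^N$).
   Context: Two-state HMM: $\mu$ Lebesgue on $\mathbb R$ or counting on $\mathbb Z$; under $\Pi_H$, $\theta=(\theta_n)_{n\le N}$ is a Markov chain on $\{0,1\}$ (initial law $\pi$, transition $Q$) and given $\theta$ the $X_n$ are independent with $\mu$-densities $f_{\theta_n}$; $E_H$ denotes expectation. Assumption A1: (i) some $\nu>0$ has $\max_jE_{X\sim f_j}|X|^\nu<\infty$; (ii) some $x^*\in\mathbb R\cup\{\pm\infty\}$ has $f_1/f_0\to\infty$ as $x\uparrow x^*$ or as $x\downarrow x^*$ (conventions $1/0=\infty,0/0=0$). Assumption A2: $Q$ has distinct rows, $\min_{ij}Q_{ij}>0$, $\pi$ invariant for $Q$. $\ell_i=\Pi_H(\theta_i=0\mid X)$, $\varphi_{\lambda,H}=(\mathbb 1\{\ell_i<\lambda\})_{i\le N}$. $\mathrm{mTDR}_H(\varphi)=\frac{E_H\#\{i:\theta_i=1,\varphi_i=1\}}{E_H\#\{i:\theta_i=1\}}$, $\mathrm{mFDR}_H(\varphi)=\frac{E_H\#\{i:\theta_i=0,\varphi_i=1\}}{E_H\#\{i:\varphi_i=1\}}$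 with the convention $0/0=0$. *)

From HB Require Import structures.
From mathcomp Require Import all_boot all_order all_algebra.
From mathcomp Require Import all_classical all_reals all_analysis.
Set Implicit Arguments. Unset Strict Implicit. Unset Printing Implicit Defensive.
Import Order.TTheory GRing.Theory Num.Theory.
Import numFieldNormedType.Exports.
Local Open Scope classical_set_scope.
Local Open Scope ring_scope.

(* States: false = 0 (null), true = 1 (non-null).
   Observations X = (X_0,...,X_{N-1}) are represented as x : nat -> R,
   only the coordinates i < N being relevant. *)

Section HMM.
Variable R : realType.
Local Notation RT := (measurableTypeR R).

(* enumeration nat -> Z (as reals): 0, -1, 1, -2, 2, ... (a bijection onto Z) *)
Definition zenum (n : nat) : R :=
  if odd n then - (n.+1./2)%:R else (n./2)%:R.

(* counting measure on Z, seen as a measure on R: A |-> #(A /\ Z) *)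
Definition countZ : {measure set RT -> \bar R} :=
  mseries (fun n => @dirac _ RT (zenum n) R) O.

Definition mu_of (disc : bool) : {measure set RT -> \bar R} :=
  if disc then countZ else lebesgue_measure.

Definition upd (x : nat -> R) (k : nat) (y : R) : nat -> R :=
  fun j => if j == k then y else x j.

(* iterated integral over the coordinates 0..n-1 (Tonelli: this is the integral
   w.r.t. the product measure mu^n for nonnegative measurable integrands) *)
Fixpoint iint_aux (mu : {measure set RT -> \bar R}) (n : nat)
    (g : (nat -> R) -> \bar R) (x : nat -> R) : \bar R :=
  match n with
  | 0 => g x
  | k.+1 => (\int[mu]_y iint_aux mu k g (upd x k y))%E
  end.

Definition iint mu n g := iint_aux mu n g (fun _ => 0).

Variables (N : nat) (pi : bool -> R) (Q : bool -> bool -> R) (f : bool -> R -> R).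

Definition prior (t : N.-tuple bool) : R :=
  if N is 0 then 1 else
  pi (nth false t 0) * \prod_(1 <= k < N) Q (nth false t k.-1) (nth false t k).

(* joint density of (theta, X) w.r.t. counting x mu^N *)
Definition jdens (t : N.-tuple bool) (x : nat -> R) : R :=
  prior t * \prod_(i < N) f (tnth t i) (x i).

Definition EH (mu : {measure set RT -> \bar R})
    (G : N.-tuple bool -> (nat -> R) -> \bar R) : \bar R :=
  (\sum_(t : N.-tuple bool) iint mu N (fun x => (jdens t x)%:E * G t x))%E.

Definition ell (i : 'I_N) (x : nat -> R) : R :=
  (\sum_(t : N.-tuple bool | ~~ tnth t i) jdens t x) /
  (\sum_(t : N.-tuple bool) jdens t x).

Definition phi_lam (lam : R) : (nat -> R) -> 'I_N -> bool :=
  fun x i => ell i x < lam.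

(* Borel sets of R^N (sigma-algebra generated by measurable boxes in the
   first N coordinates) *)
Definition boxes : set (set (nat -> R)) :=
  [set B | exists A : nat -> set RT, (forall i, measurable (A i)) /\
           B = [set x | forall i, (i < N)%N -> A i (x i)]].

Definition measurable_proc (psi : (nat -> R) -> 'I_N -> bool) : Prop :=
  forall i : 'I_N, <<s boxes >> [set x | psi x i].

Definition mTDR mu (psi : (nat -> R) -> 'I_N -> bool) : R :=
  fine (EH mu (fun t x => (#|[set i : 'I_N | tnth t i && psi x i]|%:R)%:E)) /
  fine (EH mu (fun t x => (#|[set i : 'I_N | tnth t i]|%:R)%:E)).

Definition mFDR mu (psi : (nat -> R) -> 'I_N -> bool) : R :=
  fine (EH mu (fun t x => (#|[set i : 'I_N | ~~ tnth t i && psi x i]|%:R)%:E)) /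
  fine (EH mu (fun t x => (#|[set i : 'I_N | psi x i]|%:R)%:E)).

End HMM.

(* ratio f1/f0 with conventions 1/0 = oo, 0/0 = 0 *)
Definition eratio (R : realType) (a b : R) : \bar R :=
  if b == 0 then (if a == 0 then 0%E else +oo%E) else (a / b)%:E.

Definition densities (R : realType) (disc : bool) (f : bool -> R -> R) : Prop :=
  forall j, (forall x, 0 <= f j x) /\ measurable_fun setT (f j : measurableTypeR R -> R) /\
            (\int[@mu_of R disc]_x (f j x)%:E = 1)%E.

Definition A1i (R : realType) (disc : bool) (f : bool -> R -> R) : Prop :=
  exists nu : R, 0 < nu /\
    forall j, (\int[@mu_of R disc]_x ((`|x| `^ nu) * f j x)%:E < +oo)%E.

(* For counting measure on Z, x ranges over Z, so
   the only accumulation points are x* = +oo (x increasing) and x* = -oo. *)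
Definition A1ii (R : realType) (disc : bool) (f : bool -> R -> R) : Prop :=
  let LR := fun x : R => eratio (f true x) (f false x) in
  if disc then
    (LR n%:R @[n --> \oo] --> +oo%E) \/ (LR (- n%:R) @[n --> \oo] --> +oo%E)
  else exists xs : \bar R,
    match xs with
    | EFin r => (LR x @[x --> r^'-] --> +oo%E) \/ (LR x @[x --> r^'+] --> +oo%E)
    | +oo%E => LR x @[x --> +oo] --> +oo%E
    | -oo%E => LR x @[x --> -oo] --> +oo%E
    end.

Definition hmm_params (R : realType) (pi : bool -> R) (Q : bool -> bool -> R) : Prop :=
  (forall j, 0 <= pi j) /\ pi false + pi true = 1 /\
  (forall i j, 0 <= Q i j) /\ (forall i, Q i false + Q i true = 1).

Definition A2 (R : realType) (pi : bool -> R) (Q : bool -> bool -> R) : Prop :=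
  Q false <> Q true /\ (forall i j, 0 < Q i j) /\
  (forall j, pi false * Q false j + pi true * Q true j = pi j).

(* Neyman-Pearson argument.  Let p1_i(x), p0_i(x) be the joint densities of
   (theta_i = 1, X) and (theta_i = 0, X).  Up to the null set {marg = 0}, the
   procedure phi_lam rejects H_i exactly when lam p1_i - (1 - lam) p0_i > 0, so
   for every procedure psi, pointwise,
     sum_i (phi_i - psi_i) (lam p1_i - (1 - lam) p0_i) >= 0.
   Integrating, with a, b (resp. A, B) the expected numbers of true and false
   discoveries of psi (resp. phi):  lam a + (1 - lam) B <= lam A + (1 - lam) b,
   and lam A > (1 - lam) B unless A + B = 0.  Together with the mFDR constraint
   b / (a + b) <= B / (A + B) this forces a <= A, i.e. mTDR psi <= mTDR phi_lam;
   since phi_lam is itself admissible, it attains the supremum.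
   Expectations are iterated integrals against mu; mu is s-finite (counting
   measure on Z is a series of Dirac masses), which is what makes the inner
   integrals measurable in the remaining coordinates. *)

From HB Require Import structures.
From mathcomp Require Import all_boot all_order all_algebra.
From mathcomp Require Import all_classical all_reals all_analysis.
From mathcomp Require Import measurable_realfun.
From mathcomp Require Import ring lra.
Import Order.TTheory GRing.Theory Num.Theory.
Local Open Scope classical_set_scope.
Local Open Scope ring_scope.
Set Implicit Arguments. Unset Strict Implicit. Unset Printing Implicit Defensive.

Lemma sfinite_mu_of (R : realType) (disc : bool) : sfinite_measure (@mu_of R disc).
Proof.
case: disc; last exact/sfinite_measure_sigma_finite/sigma_finiteT.
by exists (fun n => @dirac _ (measurableTypeR R) (@zenum R n) R) => // n; exact: fin_num_measure.
Qed.

(* [mu_of R disc] is a case split on [disc]; its s-finite structure is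
   declared on this alias. *)
Definition dom_measure (R : realType) (disc : bool) : set (measurableTypeR R) -> \bar R :=
  @mu_of R disc.
HB.instance Definition _ R disc := Measure.on (@dom_measure R disc).
HB.instance Definition _ R disc :=
  isSFinite.Build _ _ _ (@dom_measure R disc) (sfinite_mu_of R disc).

Section sfinite_integral.
Context d d' (X : measurableType d) (Y : measurableType d') (R : realType).
Variable m : {sfinite_measure set Y -> \bar R}.

Lemma measurable_fun_integral_sfinite (F : X * Y -> \bar R) :
  measurable_fun [set: X * Y] F -> (forall p, (0 <= F p)%E) ->
  measurable_fun setT (fun x => \int[m]_y F (x, y))%E.
Proof.
move=> mF F0.
have -> : (fun x => \int[m]_y F (x, y))%E =
    (fun x => \sum_(n <oo) \int[sfinite_measure_seq m n]_y F (x, y))%E.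
  apply/funext => x; rewrite -ge0_integral_measure_series //; last exact/measurableT_comp.
  by apply: eq_measure_integral => A mA _; exact: sfinite_measure_seqP.
apply: ge0_emeasurable_sum => [n x _ _|n _]; first exact: integral_ge0.
exact: measurable_fun_fubini_tonelli_F.
Qed.
End sfinite_integral.

(* [g_sigma_algebraType] needs a pointed choice type as carrier. *)
Definition obs (R : realType) := nat -> R.
HB.instance Definition _ R := gen_eqMixin (obs R).
HB.instance Definition _ R := gen_choiceMixin (obs R).
HB.instance Definition _ R := isPointed.Build (obs R) (fun=> 0).

Lemma iint_aux_measure (R : realType)
    (mu1 mu2 : {measure set (measurableTypeR R) -> \bar R}) n g x :
  mu1 = mu2 :> (set _ -> \bar R) -> iint_aux mu1 n g x = iint_aux mu2 n g x.
Proof.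
move=> mu12; elim: n x => //= n IH x.
by under eq_integral do rewrite IH; rewrite mu12.
Qed.

Section iterated_integral.
Variables (R : realType) (N : nat) (m : {sfinite_measure set (measurableTypeR R) -> \bar R}).
Local Notation RT := (measurableTypeR R).
Local Notation X := (@g_sigma_algebraType (obs R) (@boxes R N)).

Lemma measurable_box (A : nat -> set RT) : (forall i, measurable (A i)) ->
  measurable ([set x | forall i, (i < N)%N -> A i (x i)] : set X).
Proof. by move=> mA; apply: sub_gen_smallest; exists A. Qed.

Lemma measurable_coord i : (i < N)%N -> measurable_fun setT (fun x : X => x i : RT).
Proof.
move=> iN _ A mA; rewrite setTI.
have -> : (fun x : X => x i : RT) @^-1` A =
    [set x : X | forall j, (j < N)%N -> (if j == i then A else setT) (x j)].
  by apply/seteqP; split => x /= => [Ax j _|/(_ i iN)]; [case: eqP => // ->|rewrite eqxx].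
by apply: (measurable_box (A := fun j => if j == i then A else setT)) => j; case: eqP.
Qed.

Lemma measurable_upd k : measurable_fun setT (fun p : X * RT => upd p.1 k p.2 : X).
Proof.
apply: (@measurability _ _ _ X setT _ (@boxes R N) erefl).
move=> _ [_ [A [mA ->]] <-]; rewrite setTI.
have -> : (fun p : X * RT => upd p.1 k p.2 : X) @^-1` [set x | forall i, (i < N)%N -> A i (x i)]
   = [set x : X | forall i, (i < N)%N -> (if i == k then setT else A i) (x i)] `*`
     (if (k < N)%N then A k else setT).
  apply/seteqP; split => [[x y] /= H|[x y] /= [H1 H2] i iN].
    split => [i iN|]; first by move: (H i iN); rewrite /upd; case: eqP.
    by case: ifP => // kN; move: (H k kN); rewrite /upd eqxx.
  by rewrite /upd; case: eqP (H1 i iN) => [ik _|//]; rewrite -ik iN in H2.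
apply: measurableX.
  by apply: (measurable_box (A := fun i => if i == k then setT else A i)) => i; case: eqP.
by case: ifP.
Qed.

Definition nonneg_measurable (g : X -> \bar R) :=
  measurable_fun setT g /\ forall x, (0 <= g x)%E.

Lemma nonneg_measurable_EFin (g : X -> R) :
  measurable_fun setT g -> (forall x, 0 <= g x) -> nonneg_measurable (EFin \o g).
Proof. by move=> mg g0; split=> [|x]; [exact/measurable_EFinP|rewrite lee_fin]. Qed.

Lemma nonneg_measurable_iint n g :
  nonneg_measurable g -> nonneg_measurable (iint_aux m n g).
Proof.
move=> g_nm; elim: n => [//|n [mI I0]] /=; split=> [|x]; last first.
  by apply: integral_ge0 => y _; exact: I0.
apply: (@measurable_fun_integral_sfinite _ _ X RT R m
  (fun p => iint_aux m n g (upd p.1 n p.2))) => //.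
exact: measurableT_comp mI (measurable_upd n).
Qed.

Lemma measurable_iint_section n g x : nonneg_measurable g ->
  measurable_fun setT (fun y : RT => iint_aux m n g (upd x n y)).
Proof.
case/(nonneg_measurable_iint n) => mI _.
exact: measurableT_comp mI (measurableT_comp (measurable_upd n) (pair1_measurable (x : X))).
Qed.

Lemma iint_aux_ge0 n g x : (forall x, 0 <= g x)%E -> (0 <= iint_aux m n g x)%E.
Proof.
move=> g0; elim: n x => [|n IH] x /=; first exact: g0.
by apply: integral_ge0 => y _; exact: IH.
Qed.

Lemma iint_aux0 n x : iint_aux m n (fun=> 0%E) x = 0%E.
Proof.
elim: n x => [//|n IH] x /=.
by under eq_integral do rewrite IH; exact: integral0.
Qed.

Lemma iint_auxD n g1 g2 x : nonneg_measurable g1 -> nonneg_measurable g2 ->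
  iint_aux m n (fun x => g1 x + g2 x)%E x = (iint_aux m n g1 x + iint_aux m n g2 x)%E.
Proof.
move=> g1_nm g2_nm; elim: n x => [//|n IH] x /=.
under eq_integral do rewrite IH.
have [_ I1] := nonneg_measurable_iint n g1_nm.
have [_ I2] := nonneg_measurable_iint n g2_nm.
by apply: ge0_integralD => //; exact: measurable_iint_section.
Qed.

Lemma iint_auxZ n g (c : R) x : nonneg_measurable g -> 0 <= c ->
  iint_aux m n (fun x => c%:E * g x)%E x = (c%:E * iint_aux m n g x)%E.
Proof.
move=> g_nm c0; elim: n x => [//|n IH] x /=.
under eq_integral do rewrite IH.
have [_ I0] := nonneg_measurable_iint n g_nm.
by apply: ge0_integralZl => //; exact: measurable_iint_section.
Qed.

Lemma le_iint_aux n g1 g2 x : nonneg_measurable g1 -> nonneg_measurable g2 ->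
  (forall x, g1 x <= g2 x)%E -> (iint_aux m n g1 x <= iint_aux m n g2 x)%E.
Proof.
move=> g1_nm g2_nm le12; elim: n x => [|n IH] x /=; first exact: le12.
have [_ I1] := nonneg_measurable_iint n g1_nm.
by apply: ge0_le_integral => //; exact: measurable_iint_section.
Qed.

Lemma iint_aux_sum (I : Type) (s : seq I) (G : I -> X -> \bar R) n x :
  (forall i, nonneg_measurable (G i)) ->
  iint_aux m n (fun x => \sum_(i <- s) G i x)%E x = (\sum_(i <- s) iint_aux m n (G i) x)%E.
Proof.
move=> G_nm; elim: s x => [|a s IH] x.
  by rewrite big_nil; under [X in iint_aux _ _ X]funext do rewrite big_nil; exact: iint_aux0.
under [X in iint_aux _ _ X]funext do rewrite big_cons.
rewrite big_cons iint_auxD // -?IH //; split=> [|y].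
  by apply: emeasurable_sum => i; case: (G_nm i).
by apply: sume_ge0 => i _; case: (G_nm i).
Qed.

Lemma iint_aux_eq0 n g h x : nonneg_measurable g -> nonneg_measurable h ->
  (forall x, g x = 0%E -> h x = 0%E) ->
  iint_aux m n g x = 0%E -> iint_aux m n h x = 0%E.
Proof.
move=> g_nm h_nm gh; elim: n x => [|n IH] x /=; first exact: gh.
have [_ I0] := nonneg_measurable_iint n g_nm.
move=> intg0; have : (\int[m]_y `|iint_aux m n g (upd x n y)| = 0)%E.
  by under eq_integral do rewrite gee0_abs //.
move/(ae_eq_integral_abs m measurableT (measurable_iint_section n x g_nm)) => ae_g0.
rewrite (@ae_eq_integral _ _ _ m setT (cst 0%E)) //; first exact: integral0.
  exact: measurable_iint_section.
by apply: filterS ae_g0 => y /[apply] /= /IH.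
Qed.

Lemma iint_aux_prod (h : nat -> R -> R) (c : R) n x :
  (forall i, (i < N)%N -> measurable_fun setT (h i : RT -> R)) ->
  (forall i y, 0 <= h i y) ->
  (forall i, (i < N)%N -> (\int[m]_y (h i y)%:E = 1)%E) -> 0 <= c -> (n <= N)%N ->
  iint_aux m n (fun x => (c * \prod_(0 <= i < N) h i (x i))%:E) x =
  (c * \prod_(n <= i < N) h i (x i))%:E.
Proof.
move=> mh h0 h1 c0; elim: n x => [//|n IH] x nN /=.
have split_first y : (c * \prod_(n <= i < N) h i (upd x n y i))%:E =
    ((c * \prod_(n.+1 <= i < N) h i (x i))%:E * (h n y)%:E)%E.
  rewrite big_ltn // /upd eqxx -EFinM mulrAC -mulrA; congr (_ * (_ * _))%:E.
  by apply: eq_big_nat => i /andP[ni _]; case: eqP => // E; move: ni; rewrite E ltnn.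
under eq_integral do rewrite IH ?(ltnW nN) // split_first.
rewrite ge0_integralZl ?h1 ?mule1 //; first by apply/measurable_EFinP; exact: mh.
  by move=> y _; rewrite lee_fin.
by rewrite lee_fin; apply: mulr_ge0 => //; apply: prodr_ge0.
Qed.

Definition rint (g : X -> R) : R := fine (iint m N (fun x => (g x)%:E)).

Definition rintegrable (g : X -> R) := [/\ measurable_fun setT g, forall x, 0 <= g x
  & iint m N (fun x => (g x)%:E) \is a fin_num].

Lemma rintE g : rintegrable g -> iint m N (fun x => (g x)%:E) = (rint g)%:E.
Proof. by case=> _ _ fin_g; rewrite fineK. Qed.

Lemma rint_ge0 g : (forall x, 0 <= g x) -> 0 <= rint g.
Proof. by move=> g0; apply/fine_ge0/iint_aux_ge0 => x; rewrite lee_fin. Qed.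

Lemma iintD (g1 g2 : X -> R) : rintegrable g1 -> rintegrable g2 ->
  iint m N (fun x => (g1 x + g2 x)%:E) =
  (iint m N (fun x => (g1 x)%:E) + iint m N (fun x => (g2 x)%:E))%E.
Proof.
by case=> m1 p1 _ [m2 p2 _]; rewrite /iint -iint_auxD //; exact: nonneg_measurable_EFin.
Qed.

Lemma iintZ (g : X -> R) c : rintegrable g -> 0 <= c ->
  iint m N (fun x => (c * g x)%:E) = (c%:E * iint m N (fun x => (g x)%:E))%E.
Proof.
by case=> mg g0 _ c0; rewrite /iint -iint_auxZ //; exact: nonneg_measurable_EFin.
Qed.

Lemma rintegrableD g1 g2 : rintegrable g1 -> rintegrable g2 ->
  rintegrable (fun x => g1 x + g2 x).
Proof.
move=> ig1 ig2; have [m1 p1 f1] := ig1; have [m2 p2 f2] := ig2.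
split=> [|x|]; [exact: measurable_funD|exact: addr_ge0|].
by rewrite iintD // fin_numD f1 f2.
Qed.

Lemma rintegrableZ g c : rintegrable g -> 0 <= c -> rintegrable (fun x => c * g x).
Proof.
move=> ig c0; have [mg g0 fg] := ig.
split=> [|x|]; [exact: measurable_funM|exact: mulr_ge0|].
by rewrite iintZ // fin_numM.
Qed.

Lemma rintD g1 g2 : rintegrable g1 -> rintegrable g2 ->
  rint (fun x => g1 x + g2 x) = rint g1 + rint g2.
Proof. by move=> ig1 ig2; rewrite /rint iintD // !rintE. Qed.

Lemma rintZ g c : rintegrable g -> 0 <= c -> rint (fun x => c * g x) = c * rint g.
Proof. by move=> ig c0; rewrite /rint iintZ // !rintE. Qed.

Lemma ler_rint g1 g2 : rintegrable g1 -> rintegrable g2 ->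
  (forall x, g1 x <= g2 x) -> rint g1 <= rint g2.
Proof.
move=> ig1 ig2 le12; have [m1 p1 _] := ig1; have [m2 p2 _] := ig2.
rewrite -lee_fin -!rintE //; apply: le_iint_aux; try exact: nonneg_measurable_EFin.
by move=> x; rewrite lee_fin.
Qed.

Lemma rint_eq0 g h : rintegrable g -> rintegrable h ->
  (forall x, g x = 0 -> h x = 0) -> rint g = 0 -> rint h = 0.
Proof.
move=> ig ih gh; have [mg g0 _] := ig; have [mh h0 _] := ih.
move=> rg0; apply/EFin_inj; rewrite -rintE //.
apply: (iint_aux_eq0 (g := fun x => (g x)%:E)); try exact: nonneg_measurable_EFin.
  by move=> x [/gh ->].
by have := rintE ig; rewrite rg0.
Qed.
End iterated_integral.

Lemma le_of_np_tradeoff (R : realFieldType) (l a b A B : R) :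
  0 < l -> l < 1 -> 0 <= a -> 0 <= b -> 0 <= A -> 0 <= B ->
  l * a + (1 - l) * B <= l * A + (1 - l) * b ->
  (A + B != 0 -> (1 - l) * B < l * A) ->
  b / (a + b) <= B / (A + B) -> a <= A.
Proof.
move=> l_gt0 l_lt1 a0 b0 A0 B0 tradeoff slack.
have [AB0|AB_neq0] := eqVneq (A + B) 0.
  have [-> ->] : A = 0 /\ B = 0 by split; lra.
  rewrite addr0 invr0 mulr0; have [ab0|ab_neq0] := eqVneq (a + b) 0; first lra.
  rewrite ler_pdivrMr ?mul0r ?lt_neqAle 1?eq_sym ?ab_neq0 ?addr_ge0 // => b_le0.
  have b0' : b = 0 by lra.
  by rewrite b0' !mulr0 !addr0 in tradeoff; nra.
have {}slack := slack AB_neq0.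
have [ab0|ab_neq0] := eqVneq (a + b) 0; first lra.
rewrite ler_pdivrMr ?lt_neqAle 1?eq_sym ?ab_neq0 ?addr_ge0 // mulrAC.
rewrite ler_pdivlMr ?lt_neqAle 1?eq_sym ?AB_neq0 ?addr_ge0 // => fdr_le.
(* If a > A: l (a - A) A <= (1 - l) (b - B) A <= (1 - l) B (a - A) < l A (a - A). *)
rewrite leNgt; apply/negP => A_lt_a.
have bA_le_Ba : b * A <= B * a by nra.
have : l * (a - A) * A <= (1 - l) * (b - B) * A by apply: ler_wpM2r => //; lra.
have : (1 - l) * ((b - B) * A) <= (1 - l) * (B * (a - A)) by apply: ler_wpM2l; [lra|nra].
have : 0 < (a - A) * (l * A - (1 - l) * B) by apply: mulr_gt0; lra.
nra.
Qed.

Section hmm_model.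
Variables (R : realType) (N : nat) (m : {sfinite_measure set (measurableTypeR R) -> \bar R}).
Variables (pi : bool -> R) (Q : bool -> bool -> R) (f : bool -> R -> R).
Hypothesis pi_ge0 : forall j, 0 <= pi j.
Hypothesis Q_ge0 : forall i j, 0 <= Q i j.
Hypothesis f_ge0 : forall j x, 0 <= f j x.
Hypothesis measurable_f : forall j, measurable_fun setT (f j : measurableTypeR R -> R).
Hypothesis f_density : forall j, (\int[m]_x (f j x)%:E = 1)%E.

Local Notation RT := (measurableTypeR R).
Local Notation X := (@g_sigma_algebraType (obs R) (@boxes R N)).
Local Notation jdens := (@jdens R N pi Q f).
Local Notation rint := (@rint R N m).
Local Notation rintegrable := (@rintegrable R N m).
Local Notation measurable_proc := (@measurable_proc R N).

Lemma prior_ge0 t : 0 <= @prior R N pi Q t.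
Proof. by rewrite /prior; case: N t => [//|n] t; apply: mulr_ge0 => //; exact: prodr_ge0. Qed.

Lemma jdens_ge0 t x : 0 <= jdens t x.
Proof. by apply: mulr_ge0; [exact: prior_ge0|exact: prodr_ge0]. Qed.

Lemma measurable_jdens t : measurable_fun setT (jdens t : X -> R).
Proof.
apply: measurable_funM => //; apply: measurable_prod => i _.
exact: measurableT_comp (measurable_f _) (measurable_coord (ltn_ord i)).
Qed.

Lemma iint_jdens t : iint m N (fun x => (jdens t x)%:E) = (@prior R N pi Q t)%:E.
Proof.
have -> : (fun x => (jdens t x)%:E) =
    (fun x => (@prior R N pi Q t * \prod_(0 <= i < N) f (nth false t i) (x i))%:E).
  apply/funext => x; rewrite big_mkord /jdens.
  by congr (_ * _)%:E; apply: eq_bigr => i _; rewrite (tnth_nth false).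
by rewrite /iint (@iint_aux_prod _ _ _ (fun i => f (nth false t i))) ?big_geq ?mulr1 //;
  exact: prior_ge0.
Qed.

Definition marg (x : X) := \sum_(t : N.-tuple bool) jdens t x.

(* Joint density of X and the event [c theta_i]. *)
Definition marg_at (c : bool -> bool) (i : 'I_N) (x : X) :=
  \sum_(t : N.-tuple bool | c (tnth t i)) jdens t x.

Lemma marg_ge0 x : 0 <= marg x.
Proof. by apply: sumr_ge0 => t _; exact: jdens_ge0. Qed.

Lemma marg_at_ge0 c i x : 0 <= marg_at c i x.
Proof. by apply: sumr_ge0 => t _; exact: jdens_ge0. Qed.

Lemma marg_at_le c i x : marg_at c i x <= marg x.
Proof.
rewrite [leRHS](bigID (fun t => c (tnth t i))) lerDl.
by apply: sumr_ge0 => t _; exact: jdens_ge0.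
Qed.

Lemma marg_split i x : marg x = marg_at id i x + marg_at negb i x.
Proof. exact: bigID. Qed.

Lemma measurable_marg : measurable_fun setT (marg : X -> R).
Proof. by apply: measurable_sum => t; exact: measurable_jdens. Qed.

Lemma measurable_marg_at c i : measurable_fun setT (marg_at c i : X -> R).
Proof.
rewrite /marg_at; under eq_fun do rewrite big_mkcond /=.
by apply: measurable_sum => t; case: (c _) => //; exact: measurable_jdens.
Qed.

Lemma rintegrable_dominated (g : X -> R) c : measurable_fun setT g ->
  (forall x, 0 <= g x) -> (forall x, g x <= c * marg x) -> 0 <= c -> rintegrable g.
Proof.
move=> mg g0 gc c0; split => //.
rewrite ge0_fin_numE; last by apply: iint_aux_ge0 => x; rewrite lee_fin.
have marg_nm : nonneg_measurable (fun x : X => (marg x)%:E).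
  exact: nonneg_measurable_EFin measurable_marg marg_ge0.
apply: (@le_lt_trans _ _ (iint m N (fun x => (c * marg x)%:E))).
  apply: le_iint_aux => //; first exact: nonneg_measurable_EFin.
  apply: nonneg_measurable_EFin => [|x]; last exact/mulr_ge0/marg_ge0.
  exact: measurable_funM measurable_marg.
rewrite /iint (iint_auxZ _ _ _ marg_nm c0).
have -> : (fun x => (marg x)%:E) = (fun x : X => \sum_(t : N.-tuple bool) (jdens t x)%:E)%E.
  by apply/funext => x; rewrite sumEFin.
rewrite (iint_aux_sum _ _ _ _ (fun t => nonneg_measurable_EFin (measurable_jdens t) (jdens_ge0 t))).
under eq_bigr do rewrite -/(iint _ _ _) iint_jdens.
by rewrite sumEFin -EFinM ltry.
Qed.

Definition count_dens (c : bool -> bool) (psi : obs R -> 'I_N -> bool) (x : X) :=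
  \sum_(i < N) (psi x i)%:R * marg_at c i x.

Lemma count_dens_ge0 c psi x : 0 <= count_dens c psi x.
Proof. by apply: sumr_ge0 => i _; apply: mulr_ge0 => //; exact: marg_at_ge0. Qed.

Lemma count_dens_le c psi x : count_dens c psi x <= N%:R * marg x.
Proof.
rewrite mulr_natl -[in leRHS](card_ord N) -sumr_const; apply: ler_sum => i _.
apply: le_trans (marg_at_le c i x); rewrite ler_piMl //; first exact: marg_at_ge0.
by case: (psi x i).
Qed.

Lemma count_dens_split psi x :
  count_dens (fun=> true) psi x = count_dens id psi x + count_dens negb psi x.
Proof.
by rewrite /count_dens -big_split /=; apply: eq_bigr => i _; rewrite -mulrDr -marg_split.
Qed.

Lemma measurable_proc_natr psi i : measurable_proc psi ->
  measurable_fun setT (fun x : X => ((psi x i)%:R : R)).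
Proof.
move=> mpsi; have -> : (fun x : X => ((psi x i)%:R : R)) = \1_[set x : X | psi x i].
  apply/funext => x; rewrite indicE.
  by case: (boolP (psi x i)) => h; [rewrite mem_set|rewrite memNset //= (negbTE h)].
by apply: measurable_indic; exact: (mpsi i).
Qed.

Lemma rintegrable_count_dens c psi : measurable_proc psi -> rintegrable (count_dens c psi).
Proof.
move=> mpsi; apply: (@rintegrable_dominated _ N%:R) => //.
- apply: measurable_sum => i; apply: measurable_funM; last exact: measurable_marg_at.
  exact: measurable_proc_natr.
- exact: count_dens_ge0.
- exact: count_dens_le.
Qed.

Lemma card_setE (P : pred 'I_N) : (#|[set i | P i]|%:R : R) = \sum_(i < N) (P i)%:R.
Proof.
rewrite -sum1_card natr_sum big_mkcond /=; apply: eq_bigr => i _.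
by case: (boolP (P i)) => Pi; [rewrite mem_set|rewrite memNset //= (negbTE Pi)].
Qed.

Lemma EH_count c psi : measurable_proc psi ->
  EH pi Q f m (fun t x => (#|[set i : 'I_N | c (tnth t i) && psi x i]|%:R)%:E) =
  iint m N (fun x => (count_dens c psi x)%:E).
Proof.
move=> mpsi; rewrite /EH /iint.
have count_nm t : nonneg_measurable
    (fun x : X => (jdens t x * #|[set i : 'I_N | c (tnth t i) && psi x i]|%:R)%:E).
  apply: nonneg_measurable_EFin => [|x]; last exact: mulr_ge0 (jdens_ge0 t x) (ler0n _ _).
  apply: measurable_funM; first exact: measurable_jdens.
  under eq_fun do rewrite card_setE; apply: measurable_sum => i.
  by case: (c (tnth t i)); [exact: measurable_proc_natr|exact: measurable_cst].
rewrite -(iint_aux_sum _ _ _ _ count_nm); congr iint_aux; apply/funext => x.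
rewrite sumEFin /count_dens /marg_at; congr EFin.
under [RHS]eq_bigr do rewrite mulr_sumr big_mkcond.
rewrite [RHS]exchange_big; apply: eq_bigr => t _.
rewrite card_setE mulr_sumr; apply: eq_bigr => i _.
by case: (c _); case: (psi x i); rewrite /= ?mulr1 ?mulr0 ?mul1r ?mul0r.
Qed.

Lemma EH_ge0 (G : N.-tuple bool -> obs R -> \bar R) :
  (forall t x, 0 <= G t x)%E -> (0 <= EH pi Q f m G)%E.
Proof.
move=> G0; apply: sume_ge0 => t _; apply: iint_aux_ge0 => x.
by apply: mule_ge0 => //; rewrite lee_fin; exact: jdens_ge0.
Qed.

Variable lam : R.
Hypotheses (lam_gt0 : 0 < lam) (lam_lt1 : lam < 1).
Local Notation phi := (@phi_lam R N pi Q f lam).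
Let lam_ge0 : 0 <= lam. Proof. exact: ltW. Qed.
Let onem_lam_ge0 : 0 <= 1 - lam. Proof. by rewrite subr_ge0 ltW. Qed.

(* [np_margin i x = marg x * (lam - ell i x)]. *)
Definition np_margin (i : 'I_N) (x : X) :=
  lam * marg_at id i x - (1 - lam) * marg_at negb i x.

Lemma phi_lamE i x : phi x i = (marg x <= 0) || (0 < np_margin i x).
Proof.
have -> : np_margin i x = lam * marg x - marg_at negb i x.
  by rewrite (marg_split i) /np_margin; ring.
rewrite /phi_lam /ell -/(marg x) -/(marg_at negb i x) subr_gt0.
have := marg_ge0 x; rewrite le_eqVlt => /orP[/eqP <-|marg_gt0].
  by rewrite invr0 mulr0 lam_gt0 lexx.
by rewrite ltr_pdivrMr // leNgt marg_gt0.
Qed.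

Lemma measurable_phi_lam : measurable_proc phi.
Proof.
move=> i; change (measurable [set x : X | phi x i]).
rewrite (_ : [set x | _] = [set x : X | marg x <= 0] `|` [set x : X | 0 < np_margin i x]).
  apply: measurableU.
    by rewrite -[X in measurable X]setTI; apply: measurable_fun_ler => //; exact: measurable_marg.
  rewrite -[X in measurable X]setTI; apply: measurable_fun_ltr => //.
  by apply: measurable_funB; apply: measurable_funM => //; exact: measurable_marg_at.
by apply/seteqP; split => x /=; rewrite phi_lamE => /orP.
Qed.

Lemma marg0_margin i x : marg x <= 0 -> np_margin i x = 0.
Proof.
rewrite /np_margin => marg_le0; have := marg_split i x; have := marg_ge0 x.
have := marg_at_ge0 id i x; have := marg_at_ge0 negb i x => *.
have [-> ->] : marg_at id i x = 0 /\ marg_at negb i x = 0 by split; lra.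
by rewrite !mulr0 subrr.
Qed.

Lemma np_margin_le (b : bool) i x : b%:R * np_margin i x <= (phi x i)%:R * np_margin i x.
Proof.
have := phi_lamE i x; case: (phi x i) => /esym.
  by case/orP => [/(marg0_margin i) ->|/ltW]; case: b; rewrite /= ?mul1r ?mul0r ?mulr0.
by case/norP => _; rewrite -leNgt; case: b; rewrite /= ?mul1r ?mul0r.
Qed.

Lemma sum_np_margin (psi : obs R -> 'I_N -> bool) x : \sum_(i < N) (psi x i)%:R * np_margin i x =
  lam * count_dens id psi x - (1 - lam) * count_dens negb psi x.
Proof.
rewrite /count_dens !mulr_sumr -sumrB; apply: eq_bigr => i _.
by rewrite /np_margin; ring.
Qed.

Definition np_slack (x : X) := \sum_(i < N) (phi x i)%:R * np_margin i x.

Lemma np_slack_ge0 x : 0 <= np_slack x.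
Proof. by apply: sumr_ge0 => i _; have := np_margin_le false i x; rewrite mul0r. Qed.

Lemma np_slackE x : np_slack x + (1 - lam) * count_dens negb phi x = lam * count_dens id phi x.
Proof. by rewrite /np_slack sum_np_margin subrK. Qed.

Lemma np_slack_eq0 x : np_slack x = 0 -> count_dens (fun=> true) phi x = 0.
Proof.
move=> slack0; apply: big1 => i _.
have term_ge0 j : 0 <= (phi x j)%:R * np_margin j x.
  by have := np_margin_le false j x; rewrite mul0r.
have /eqP := psumr_eq0P (fun j _ => term_ge0 j) slack0 (i:=i) isT.
have := phi_lamE i x; case: (phi x i) => /esym; rewrite ?mul0r // !mul1r.
case/orP => [marg_le0 _|/gt_eqF ->//]; apply/le_anti.
by rewrite marg_at_ge0 (le_trans (marg_at_le _ i x)).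
Qed.

Lemma count_dens_np psi x :
  lam * count_dens id psi x + (1 - lam) * count_dens negb phi x <=
  lam * count_dens id phi x + (1 - lam) * count_dens negb psi x.
Proof.
have : \sum_(i < N) (psi x i)%:R * np_margin i x <= \sum_(i < N) (phi x i)%:R * np_margin i x.
  by apply: ler_sum => i _; exact: np_margin_le.
by rewrite !sum_np_margin; lra.
Qed.

Lemma rintegrable_np_slack : rintegrable np_slack.
Proof.
apply: (@rintegrable_dominated _ (lam * N%:R)); last exact/mulr_ge0/ler0n.
- apply: measurable_sum => i; apply: measurable_funM.
    exact: measurable_proc_natr measurable_phi_lam.
  by apply: measurable_funB; apply: measurable_funM => //; exact: measurable_marg_at.
- exact: np_slack_ge0.
- move=> x; rewrite -mulrA; apply: le_trans _ (ler_wpM2l (ltW lam_gt0) (count_dens_le id phi x)).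
  by rewrite -np_slackE lerDl; apply: mulr_ge0 => //; exact: count_dens_ge0.
Qed.

Lemma rint_count_dens_np psi : measurable_proc psi ->
  lam * rint (count_dens id psi) + (1 - lam) * rint (count_dens negb phi) <=
  lam * rint (count_dens id phi) + (1 - lam) * rint (count_dens negb psi).
Proof.
move=> mpsi.
have rint_phi c := rintegrable_count_dens c measurable_phi_lam.
have rint_psi c := rintegrable_count_dens c mpsi.
rewrite -!rintZ // -!rintD; try exact: rintegrableZ.
by apply: ler_rint => [||x]; rewrite ?count_dens_np //; apply: rintegrableD; exact: rintegrableZ.
Qed.

Lemma rint_count_dens_phi_lam :
  rint (count_dens id phi) + rint (count_dens negb phi) != 0 ->
  (1 - lam) * rint (count_dens negb phi) < lam * rint (count_dens id phi).
Proof.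
have rint_phi c := rintegrable_count_dens c measurable_phi_lam.
have slackE : rint np_slack + (1 - lam) * rint (count_dens negb phi) =
    lam * rint (count_dens id phi).
  rewrite -!rintZ // -rintD //; last 2 first.
  - exact: rintegrable_np_slack.
  - exact: rintegrableZ.
  by congr rint; apply/funext => x; exact: np_slackE.
move=> AB_neq0; rewrite -slackE ltrDr lt_neqAle rint_ge0 ?andbT; last exact: np_slack_ge0.
apply: contra AB_neq0 => /eqP/esym slack0; rewrite -rintD //.
under eq_fun do rewrite -count_dens_split.
by apply/eqP/(rint_eq0 rintegrable_np_slack (rint_phi _) np_slack_eq0).
Qed.

Lemma EH_measure (mu : {measure set RT -> \bar R}) (G : N.-tuple bool -> obs R -> \bar R) :
  mu = m :> (set RT -> \bar R) -> EH pi Q f mu G = EH pi Q f m G.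
Proof. by move=> mu_m; apply: eq_bigr => t _; exact: iint_aux_measure. Qed.

Lemma fine_EH_count c psi : measurable_proc psi ->
  fine (EH pi Q f m (fun t x => (#|[set i : 'I_N | c (tnth t i) && psi x i]|%:R)%:E)) =
  rint (count_dens c psi).
Proof. by move=> mpsi; rewrite EH_count // rintE //; exact: rintegrable_count_dens. Qed.

Lemma rint_count_dens_split psi : measurable_proc psi ->
  rint (count_dens (fun=> true) psi) = rint (count_dens id psi) + rint (count_dens negb psi).
Proof.
move=> mpsi; rewrite -rintD; try exact: rintegrable_count_dens.
by congr rint; apply/funext => x; exact: count_dens_split.
Qed.

(* [mu] is the measure of the statement, [m] the same function seen as an
   s-finite measure. *)
Lemma phi_lam_optimal (mu : {measure set RT -> \bar R}) psi :
  mu = m :> (set RT -> \bar R) -> measurable_proc psi ->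
  @mFDR R N pi Q f mu psi <= @mFDR R N pi Q f mu phi ->
  @mTDR R N pi Q f mu psi <= @mTDR R N pi Q f mu phi.
Proof.
move=> mu_m mpsi; have mphi := measurable_phi_lam.
rewrite /mFDR /mTDR !(EH_measure _ mu_m).
rewrite !(fine_EH_count id mpsi, fine_EH_count id mphi).
rewrite !(fine_EH_count negb mpsi, fine_EH_count negb mphi).
rewrite !(fine_EH_count (fun=> true) mpsi, fine_EH_count (fun=> true) mphi).
rewrite !rint_count_dens_split // => fdr_le.
apply: ler_wpM2r; first by rewrite invr_ge0; apply/fine_ge0/EH_ge0 => t x; rewrite lee_fin.
apply: (le_of_np_tradeoff lam_gt0 lam_lt1) fdr_le; try exact: rint_ge0 (count_dens_ge0 _ _).
- exact: rint_count_dens_np.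
- exact: rint_count_dens_phi_lam.
Qed.
End hmm_model.

Lemma sup_eq_max (R : realType) (E : set R) x : E x -> ubound E x -> sup E = x.
Proof.
move=> Ex ubx; apply/le_anti/andP; split; first exact: ge_sup (ex_intro _ x Ex) ubx.
exact: ub_le_sup (ex_intro _ x ubx) _ Ex.
Qed.

Theorem lemma21 (R : realType) (disc : bool) (N : nat)
  (pi : bool -> R) (Q : bool -> bool -> R) (f : bool -> R -> R)
  (Hparams : hmm_params pi Q) (Hdens : densities disc f)
  (HA1i : A1i disc f) (HA1ii : A1ii disc f) (HA2 : A2 pi Q)
  (lam : R) (Hlam0 : 0 < lam) (Hlam1 : lam < 1) :
  mTDR (N:=N) pi Q f (@mu_of R disc) (phi_lam (N:=N) pi Q f lam) =
  sup [set mTDR (N:=N) pi Q f (@mu_of R disc) psi | psi in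
        [set psi | measurable_proc psi /\
           mFDR (N:=N) pi Q f (@mu_of R disc) psi <= mFDR (N:=N) pi Q f (@mu_of R disc) (phi_lam (N:=N) pi Q f lam)]].
Proof.
have [pi_ge0 [_ [Q_ge0 _]]] := Hparams.
have /all_and2[f_ge0 /all_and2[measurable_f f_density]] := Hdens.
pose m := (@dom_measure R disc : {sfinite_measure set (measurableTypeR R) -> \bar R}).
have mphi := measurable_phi_lam (N := N) pi_ge0 Q_ge0 f_ge0 measurable_f Hlam0.
apply/esym/sup_eq_max; first by exists (phi_lam pi Q f lam).
move=> _ [psi [mpsi fdr_le] <-].
exact: (@phi_lam_optimal R N m pi Q f pi_ge0 Q_ge0 f_ge0 measurable_f f_density
  lam Hlam0 Hlam1 (mu_of R disc) psi erefl mpsi fdr_le).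
Qed.
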